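(* Let $m\in\mathbb{N}$ and $f_1,\dots,f_m\in C[0,1]$. Let $q'=P/Q$, where $P(x)=p(f_1(x),\dots,f_m(x))$ and $Q(x)=q(f_1(x),\dots,f_m(x))$ for real polynomials $p,q$ in $m$ variables, and where $Q(x)\neq0$ for all $x\in[0,1]$. Then $$\overline{\dim}_B G(q')\le \max_{1\le i\le m}\overline{\dim}_B G(f_i).$$
   Context: $C[0,1]$ is the space of real-valued continuous functions on $[0,1]$; $G(h)=\{(x,h(x)):x\in[0,1]\}\subset\mathbb{R}^2$ is the graph of $h$. For a nonempty bounded set $F$, $N_\delta(F)$ is the smallest number of sets of diameter at most $\delta$ covering $F$, and $\overline{\dim}_B F=\limsup_{\delta\to0}\frac{\log N_\delta(F)}{-\log\delta}$. *)

From HB Require Import structures.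
From mathcomp Require Import all_boot all_order all_algebra.
From mathcomp Require Import all_classical all_reals all_analysis.
From mathcomp Require mpoly.
Set Implicit Arguments. Unset Strict Implicit. Unset Printing Implicit Defensive.
Import Order.TTheory GRing.Theory Num.Theory.
Local Open Scope classical_set_scope.
Local Open Scope ring_scope.

Section BoxDim.
Variable R : realType.

Definition graph (h : R -> R) : set (R * R) :=
  [set (x, h x) | x in `[0, 1]%classic].

Definition edist (a b : R * R) : R :=
  Num.sqrt ((a.1 - b.1) ^+ 2 + (a.2 - b.2) ^+ 2).

Definition diam_le (A : set (R * R)) (d : R) : Prop :=
  forall x y, A x -> A y -> edist x y <= d.

Definition covering_number (F : set (R * R)) (d : R) : \bar R :=
  ereal_inf [set (n%:R)%:E | n in
    [set n : nat | exists U : nat -> set (R * R),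
       (forall i, (i < n)%N -> diam_le (U i) d) /\
       F `<=` [set z | exists2 i, (i < n)%N & U i z]]].

Definition box_ratio (F : set (R * R)) (d : R) : \bar R :=
  (ln (fine (covering_number F d)) / (- ln d))%:E.

Definition upper_box_dim (F : set (R * R)) : \bar R :=
  ereal_inf [set ereal_sup [set box_ratio F d | d in `]0, e[%classic]
            | e in `]0, 1[%classic].

End BoxDim.

(* Both P and Q are Lipschitz with respect to (x, y) |-> \sum_i |f_i x - f_i y|
   on [0, 1]: this property passes through sums and products of bounded
   functions.  As Q is bounded away from 0, the same holds for g = P / Q with
   some constant L.  Now cut [0, 1] into columns of width d and take optimal
   d-covers of the graphs of the f_i.  By the intermediate value theorem the
   oscillation of f_i on a column is at most d times the number of its cover
   sets meeting the graph over that column, hence the oscillation of g there is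
   at most L d times the total such number, and the graph of g over the column
   fits in a stack of proportionally many boxes of diameter 2d.  Each cover set
   meets at most two columns, so N_{2d}(G(g)) <= C * \sum_i N_d(G(f_i)) for a
   constant C, which gives the inequality between upper box dimensions. *)

From Pilot Require Import Defs.
From HB Require Import structures.
From mathcomp Require Import all_boot all_order all_algebra.
From mathcomp Require Import all_classical all_reals all_analysis.
From mathcomp Require mpoly.
From mathcomp Require Import ring lra zify.
Import Order.TTheory GRing.Theory Num.Theory numFieldNormedType.Exports.
Local Open Scope classical_set_scope.
Local Open Scope ring_scope.
Set Implicit Arguments. Unset Strict Implicit. Unset Printing Implicit Defensive.

Section Coverings.
Variable R : realType.
Implicit Types (F G : set (R * R)) (d : R).

Definition coverable F d (n : nat) := exists U : nat -> set (R * R),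
  (forall i, (i < n)%N -> diam_le (U i) d) /\
  F `<=` [set z | exists2 i, (i < n)%N & U i z].

Definition finitely_coverable F := forall d, 0 < d -> exists n, coverable F d n.

Lemma coverable_sub F G d n : F `<=` G -> coverable G d n -> coverable F d n.
Proof. by move=> FG [U [Ud GU]]; exists U; split => // z /FG /GU. Qed.

Lemma coverable0 d n : coverable set0 d n.
Proof. by exists (fun=> set0); split => // i _ x y []. Qed.

Lemma coverable1 F d : diam_le F d -> coverable F d 1.
Proof. by move=> Fd; exists (fun=> F); split => // z Fz; exists 0%N. Qed.

Lemma coverable_leq F d n n' : (n <= n')%N -> coverable F d n -> coverable F d n'.
Proof.
move=> nn' [U [Ud FU]]; exists (fun i => if (i < n)%N then U i else set0); split.
  by move=> i _; case: ifP => [/Ud //|_ x y []].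
move=> z /FU [i ilt Uz]; exists i; first exact: leq_trans ilt nn'.
by rewrite ilt.
Qed.

Lemma coverableU F G d a b :
  coverable F d a -> coverable G d b -> coverable (F `|` G) d (a + b).
Proof.
move=> [U [Ud FU]] [V [Vd GV]].
exists (fun i => if (i < a)%N then U i else V (i - a)%N); split.
  move=> i ilt; case: ifP => [/Ud //|/negbT]; rewrite -leqNgt => ai.
  by apply: Vd; rewrite ltn_subLR.
move=> z [/FU [i ilt Uz]|/GV [i ilt Vz]].
  by exists i; [exact: leq_trans ilt (leq_addr _ _)|rewrite ilt].
exists (a + i)%N; first by rewrite ltn_add2l.
by rewrite ltnNge leq_addr /= addKn.
Qed.

Lemma coverable_bigcup n (A : nat -> set (R * R)) d (c : nat -> nat) F :
  (forall k, (k < n)%N -> coverable (A k) d (c k)) ->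
  F `<=` [set z | exists2 k, (k < n)%N & A k z] ->
  coverable F d (\sum_(k < n) c k).
Proof.
elim: n F => [|n IH] F Ac FA.
  by rewrite big_ord0; apply: (coverable_sub _ (coverable0 d 0)) => z /FA [].
rewrite big_ord_recr /=.
apply: (@coverable_sub _ ([set z | exists2 k, (k < n)%N & A k z] `|` A n)).
  move=> z /FA [k]; rewrite ltnS leq_eqVlt => /orP [/eqP ->|kn] Az; first by right.
  by left; exists k.
apply: coverableU; last exact: Ac.
by apply: IH => // k kn; apply: Ac; exact: ltnW.
Qed.

Lemma coverable_gt0 F d n : F !=set0 -> coverable F d n -> (0 < n)%N.
Proof. by case=> z Fz [U [_ /(_ z Fz) [i]]]; case: n. Qed.

Lemma covering_number_attained F d n : coverable F d n ->
  exists n0, [/\ coverable F d n0, covering_number F d = n0%:R%:E &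
                 forall k, coverable F d k -> (n0 <= k)%N].
Proof.
move=> Fn; have ex : exists k, `[< coverable F d k >] by exists n; exact/asboolP.
case: (ex_minnP ex) => n0 /asboolP Fn0 min0.
exists n0; split => //; last by move=> k /asboolP /min0.
apply/eqP; rewrite eq_le; apply/andP; split.
  by apply: ereal_inf_lbound; exists n0.
apply: le_ereal_inf_tmp => _ [k /= Fk <-].
by rewrite lee_fin ler_nat; apply: min0; exact/asboolP.
Qed.

Lemma edist_ge_norm1 (z w : R * R) : `|z.1 - w.1| <= Defs.edist z w.
Proof. by rewrite /Defs.edist -sqrtr_sqr ler_wsqrtr // lerDl sqr_ge0. Qed.

Lemma edist_ge_norm2 (z w : R * R) : `|z.2 - w.2| <= Defs.edist z w.
Proof. by rewrite /Defs.edist -sqrtr_sqr ler_wsqrtr // lerDr sqr_ge0. Qed.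

Lemma edist_le_double (z w : R * R) d :
  `|z.1 - w.1| <= d -> `|z.2 - w.2| <= d -> Defs.edist z w <= 2 * d.
Proof.
move=> h1 h2; have d0 : 0 <= d := le_trans (normr_ge0 _) h1.
rewrite /Defs.edist -(ger0_norm (_ : 0 <= 2 * d)) ?mulr_ge0 //.
rewrite -sqrtr_sqr ler_sqrt ?sqr_ge0 // -!(real_normK (num_real (_ - _))).
have := normr_ge0 (z.1 - w.1); have := normr_ge0 (z.2 - w.2); nra.
Qed.

End Coverings.

Section Columns.
Variable R : realType.
Implicit Types (d : R) (h : R -> R).

Lemma interval_length_le_card (N : nat) (V : 'I_N -> set R) (S : {set 'I_N})
    d (a b : R) : 0 <= d ->
  (forall j, j \in S -> forall y y', V j y -> V j y' -> `|y - y'| <= d) ->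
  (forall y, a <= y <= b -> exists2 j, j \in S & V j y) ->
  b - a <= #|S|%:R * d.
Proof.
move=> d0; move Sk: #|S| => k; elim: k S Sk a => [|k IH] S Sk a Vd SV.
  have [ab|] := leP a b; last by rewrite mul0r; lra.
  have /SV [j] : a <= a <= b by rewrite lexx ab.
  by rewrite (cards0_eq Sk) inE.
have [ab|] := leP a b; last by have := mulr_ge0 (ler0n R k.+1) d0; lra.
have /SV [j0 j0S Va] : a <= a <= b by rewrite lexx ab.
have S'k : #|S :\ j0| = k by move: Sk; rewrite (cardsD1 j0) j0S add1n => -[].
rewrite -natr1 mulrDl mul1r; apply/ler_addgt0Pr => e e0.
(* [V j0] contains [a] and has diameter [<= d], so the other cells cover
   [a + d + e, b] *)
suff : b - (a + d + e) <= k%:R * d by lra.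
apply: (IH (S :\ j0)) => // [j /setD1P [_ /Vd] //|y /andP [ye yb]].
have /SV [j jS Vy] : a <= y <= b by apply/andP; split => //; lra.
exists j => //; apply/setD1P; split => //; apply/eqP => jj0.
have := Vd j0 j0S y a; rewrite -jj0 => /(_ Vy); rewrite jj0 => /(_ Va).
by move=> /(le_trans (ler_norm _)); lra.
Qed.

Definition column d (k : nat) := [set x : R | k%:R * d <= x < k.+1%:R * d].

Lemma column_dist d k x x' : column d k x -> column d k x' -> `|x - x'| <= d.
Proof.
rewrite /column /= -natr1 mulrDl mul1r => /andP [? ?] /andP [? ?].
by rewrite ler_norml; apply/andP; split; lra.
Qed.

Lemma column_convex d k x t x' :
  column d k x -> column d k x' -> x <= t <= x' -> column d k t.
Proof. by move=> /andP [? ?] /andP [? ?] /andP [? ?]; apply/andP; split; lra. Qed.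

Lemma column_gap d k k' x x' : 0 <= d -> (k.+2 <= k')%N ->
  column d k x -> column d k' x' -> d < x' - x.
Proof.
move=> d0 kk' /andP [_ xk] /andP [kx' _].
have : k.+2%:R * d <= k'%:R * d by rewrite ler_wpM2r // ler_nat.
by move: xk; rewrite -!natr1 !mulrDl !mul1r; lra.
Qed.

Lemma coverable_slab (X : set R) d (a : R) (T : nat) : 0 <= d ->
  (forall x x', X x -> X x' -> `|x - x'| <= d) ->
  coverable [set z | X z.1 /\ a <= z.2 <= a + T%:R * d] (2 * d) T.+1.
Proof.
move=> d0 Xd.
have slab c : coverable [set z | X z.1 /\ c <= z.2 <= c + d] (2 * d) 1.
  apply: coverable1 => z w [z1 /andP [? ?]] [w1 /andP [? ?]].
  by apply: edist_le_double; [exact: Xd|rewrite ler_norml; apply/andP; split; lra].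
elim: T => [|T IH].
  apply: coverable_sub (slab a) => z [? /andP [? ?]].
  by split => //; apply/andP; split; lra.
rewrite -addn1; apply: coverable_sub (coverableU IH (slab (a + T%:R * d))).
move=> z [Xz /andP [az za]]; have [zT|zT] := leP z.2 (a + T%:R * d).
  by left; split => //; apply/andP.
by right; split => //; rewrite (ltW zT) /=; move: za; rewrite natrD mulrDl mul1r addrA.
Qed.

Lemma coverable_graph_strip h (J : set R) d (T : nat) : 0 <= d ->
  (forall x x', J x -> J x' -> `|x - x'| <= d) ->
  (forall x x', J x -> J x' -> x \in `[0, 1] -> x' \in `[0, 1] ->
     `|h x - h x'| <= T%:R * d) ->
  coverable [set z | graph h z /\ J z.1] (2 * d) (2 * T).+1.
Proof.
move=> d0 Jd Jh.
have [[x0 [Jx0 Ix0]]|nox] := pselect (exists x, J x /\ x \in `[0, 1]); last first.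
  apply: (coverable_sub _ (coverable0 _ _)) => _ [[x xI <-] Jx].
  by apply: nox; exists x.
apply: coverable_sub (coverable_slab (h x0 - T%:R * d) (2 * T) d0 Jd).
move=> _ [[x xI <-] Jx] /=; split => //.
have := Jh x x0 Jx Jx0 xI Ix0; rewrite ler_norml natrM mulrAC => /andP [? ?].
by apply/andP; split; lra.
Qed.

Lemma coverable_graph_columns h d e (c : nat -> nat) : 0 < d ->
  (forall k, coverable [set z | graph h z /\ column d k z.1] e (c k)) ->
  exists n, coverable (graph h) e (\sum_(k < n) c k).
Proof.
move=> d0 hc; exists (Num.Def.archi_bound d^-1).
apply: coverable_bigcup (fun k _ => hc k) _ => _ [x xI <-].
suff [k kn xk] : exists2 k, (k < Num.Def.archi_bound d^-1)%N & column d k x.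
  by exists k => //; split => //; exists x.
have {xI} /andP [x0 x1] : 0 <= x <= 1 by move: xI; rewrite /= in_itv.
have : x < (Num.Def.archi_bound d^-1)%:R * d.
  apply: le_lt_trans x1 _.
  by rewrite -ltr_pdivrMr // div1r archi_boundP // invr_ge0 ltW.
elim: (Num.Def.archi_bound d^-1) => [|n IH] xn; first by rewrite mul0r in xn; lra.
have [xn'|xn'] := ltP x (n%:R * d); last by exists n => //; apply/andP.
by have [k kn xk] := IH xn'; exists k => //; exact: ltnW.
Qed.

Lemma graph_neq0 h : graph h !=set0.
Proof. by exists (0, h 0); exists 0 => //=; rewrite in_itv /= lexx ler01. Qed.

Lemma continuous_bounded h : {within `[0, 1], continuous h} ->
  exists2 B, 0 <= B & forall x, x \in `[0, 1] -> `|h x| <= B.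
Proof.
move=> hc; have [c1 _ hc1] := EVT_max ler01 hc; have [c2 _ hc2] := EVT_min ler01 hc.
exists (`|h c1| + `|h c2|); first by rewrite addr_ge0.
move=> x xI; have := hc1 x xI; have := hc2 x xI.
have := ler_norm (h c1); have := ler_norm (- h c2); rewrite normrN.
have := normr_ge0 (h c1); have := normr_ge0 (h c2).
by rewrite ler_norml; move=> *; apply/andP; split; lra.
Qed.

Lemma finitely_coverable_graph h : {within `[0, 1], continuous h} ->
  finitely_coverable (graph h).
Proof.
move=> hc e e0.
have [d d0 ->] : exists2 d, 0 < d & e = 2 * d.
  by exists (e / 2); [rewrite divr_gt0 | field].
have [B B0 hB] := continuous_bounded hc.
pose T := Num.Def.archi_bound (2 * B / d).
have [|n dcov] := @coverable_graph_columns h d (2 * d) (fun=> (2 * T).+1) d0.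
  move=> k; apply: (coverable_graph_strip (ltW d0) (@column_dist d k)).
  move=> x x' _ _ xI x'I.
  apply: le_trans (ler_distD 0 _ _) _; rewrite subr0 sub0r normrN.
  have := archi_boundP (divr_ge0 (mulr_ge0 (ler0n R 2) B0) (ltW d0)).
  rewrite ltr_pdivrMr // => /ltW; apply: le_trans.
  by rewrite mulr_natl mulr2n lerD ?hB.
by exists (\sum_(k < n) (2 * T).+1)%N.
Qed.

End Columns.

Section Oscillation.
Variable R : realType.
Implicit Types (d : R) (h : R -> R).

Definition cells_over h (J : set R) (N : nat) (U : nat -> set (R * R)) :
    {set 'I_N} :=
  [set j : 'I_N | `[< exists t, [/\ J t, t \in `[0, 1] & U j (t, h t)] >]].

Lemma oscillation_le_cells h N U d (J : set R) : 0 <= d ->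
  {within `[0, 1], continuous h} ->
  (forall j, (j < N)%N -> diam_le (U j) d) ->
  graph h `<=` [set z | exists2 j, (j < N)%N & U j z] ->
  (forall x t x', J x -> J x' -> x <= t <= x' -> J t) ->
  forall x x', J x -> J x' -> x \in `[0, 1] -> x' \in `[0, 1] ->
  `|h x - h x'| <= #|cells_over h J N U|%:R * d.
Proof.
move=> d0 hc Ud hU Jconv x x' Jx Jx' xI x'I.
wlog xx' : x x' Jx Jx' xI x'I / x <= x'.
  move=> hw; have [|/ltW] := leP x x'; first exact: hw.
  by rewrite distrC; exact: hw.
pose V j := [set y | exists t, [/\ J t, t \in `[0, 1], U j (t, y) & y = h t]].
have Vd j : j \in cells_over h J N U -> forall y y', V j y -> V j y' -> `|y - y'| <= d.
  move=> _ y y' [t [_ _ Ut _]] [t' [_ _ Ut' _]].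
  exact: le_trans (edist_ge_norm2 (t, y) (t', y')) (Ud j (ltn_ord j) _ _ Ut Ut').
have sub : `[x, x'] `<=` `[0, 1].
  move: xI x'I; rewrite !in_itv /= => /andP [x0 _] /andP [_ x'1] t.
  by rewrite /= !in_itv /= => /andP [xt tx']; apply/andP; split; lra.
have cover y : Num.min (h x) (h x') <= y <= Num.max (h x) (h x') ->
    exists2 j, j \in cells_over h J N U & V j y.
  move=> hy; have [t tI <-] := IVT xx' (continuous_subspaceW sub hc) hy.
  have Jt : J t by apply: (Jconv x t x') => //; move: tI; rewrite in_itv.
  have /hU [j jN Uj] : graph h (t, h t) by exists t => //; exact: sub.
  exists (Ordinal jN); last by exists t; split => //; exact: sub.
  by rewrite inE; apply/asboolP; exists t; split => //; exact: sub.
have := interval_length_le_card d0 Vd cover.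
rewrite minEle maxEle; case: (leP (h x) (h x')) => hxx'.
  by rewrite distrC ger0_norm // subr_ge0.
by rewrite ger0_norm // subr_ge0 ltW.
Qed.

Lemma sum_indicator_le2 (P : nat -> bool) n :
  (forall k k', P k -> P k' -> (k' <= k.+1)%N) -> (\sum_(k < n) (P k : nat) <= 2)%N.
Proof.
move=> Pk; elim: n => [|n IH]; first by rewrite big_ord0.
rewrite big_ord_recr /=; case Pn: (P n); last by rewrite addn0.
suff : (\sum_(k < n) (P k : nat) <= 1)%N by rewrite addn1.
case: n IH Pn => [|n] _ Pn; first by rewrite big_ord0.
(* with [P n.+1], the hypothesis rules out every [k < n] *)
rewrite big_ord_recr /= big1 ?add0n ?leq_b1 // => k _.
apply/eqP; rewrite eqb0; apply/negP => /(Pk _ _)/(_ Pn).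
by rewrite ltnS leqNgt ltn_ord.
Qed.

Lemma sum_card_le_double n N (S : nat -> {set 'I_N}) :
  (forall j k k', j \in S k -> j \in S k' -> (k' <= k.+1)%N) ->
  (\sum_(k < n) #|S k| <= 2 * N)%N.
Proof.
move=> Sj.
rewrite (eq_bigr (fun k : 'I_n => \sum_(j : 'I_N) (j \in S k : nat))); last first.
  by move=> k _; rewrite -sum1_card big_mkcond.
rewrite exchange_big /= -[X in (_ <= 2 * X)%N]card_ord -sum1_card big_distrr /=.
apply: leq_sum => j _; rewrite muln1.
by apply: (@sum_indicator_le2 (fun k => j \in S k)) => k k'; exact: Sj.
Qed.

Lemma sum_card_cells_over_columns h N U d n : 0 <= d ->
  (forall j, (j < N)%N -> diam_le (U j) d) ->
  (\sum_(k < n) #|cells_over h (column d k) N U| <= 2 * N)%N.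
Proof.
move=> d0 Ud; apply: (@sum_card_le_double _ _ (fun k => cells_over h (column d k) N U)).
move=> j k k'.
rewrite /= !inE => -[t [kt _ Ut]] [t' [kt' _ Ut']].
rewrite leqNgt; apply/negP => /(column_gap d0)/(_ kt kt').
have := le_trans (edist_ge_norm1 (t, h t) (t', h t')) (Ud j (ltn_ord j) _ _ Ut Ut').
by rewrite /= distrC => /(le_trans (ler_norm _)); lra.
Qed.

Section LipschitzGraphColumn.
Variables (m : nat) (f : 'I_m -> R -> R) (g : R -> R) (L : nat) (d : R).
Variables (N : 'I_m -> nat) (U : 'I_m -> nat -> set (R * R)).
Hypotheses (m_gt0 : (0 < m)%N) (d_gt0 : 0 < d).
Hypothesis f_cont : forall i, {within `[0, 1], continuous f i}.
Hypothesis g_lip : forall x y, x \in `[0, 1] -> y \in `[0, 1] ->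
  `|g x - g y| <= L%:R * \sum_i `|f i x - f i y|.
Hypothesis U_diam : forall i j, (j < N i)%N -> diam_le (U i j) d.
Hypothesis U_cover : forall i,
  graph (f i) `<=` [set z | exists2 j, (j < N i)%N & U i j z].

Lemma coverable_graph_column k :
  coverable [set z | graph g z /\ column d k z.1] (2 * d)
    ((2 * L).+1 * \sum_i #|cells_over (f i) (column d k) (N i) (U i)|).
Proof.
set c := (\sum_i _)%N.
have [[x0 [kx0 x0I]]|nox] :=
    pselect (exists x, column d k x /\ x \in `[0, 1]); last first.
  apply: (coverable_sub _ (coverable0 _ _)) => _ [[x xI <-] kx].
  by apply: nox; exists x.
(* a column meeting [0, 1] meets the graph of every [f i], so [c > 0] absorbs
   the extra box of the strip *)
have c_gt0 : (0 < c)%N.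
  pose i0 := Ordinal m_gt0.
  rewrite /c (bigD1 i0) //= ltn_addr // card_gt0; apply/set0Pn.
  have /U_cover [j jN Uj] : graph (f i0) (x0, f i0 x0) by exists x0.
  by exists (Ordinal jN); rewrite inE; apply/asboolP; exists x0.
apply: coverable_leq
  (coverable_graph_strip (T := L * c) (ltW d_gt0) (@column_dist _ d k) _).
  by nia.
move=> x x' kx kx' xI x'I; apply: le_trans (g_lip xI x'I) _.
rewrite natrM -mulrA ler_wpM2l // /c natr_sum mulr_suml ler_sum // => i _.
exact: (oscillation_le_cells (ltW d_gt0) (@f_cont i) (@U_diam i) (@U_cover i)
  (@column_convex _ d k) kx kx' xI x'I).
Qed.

End LipschitzGraphColumn.

Lemma coverable_graph_lipschitz m (f : 'I_m -> R -> R) g (L : nat) d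
    (N : 'I_m -> nat) :
  (0 < m)%N -> 0 < d -> (forall i, {within `[0, 1], continuous f i}) ->
  (forall x y, x \in `[0, 1] -> y \in `[0, 1] ->
     `|g x - g y| <= L%:R * \sum_i `|f i x - f i y|) ->
  (forall i, coverable (graph (f i)) d (N i)) ->
  coverable (graph g) (2 * d) ((2 * L).+1 * (2 * \sum_i N i)).
Proof.
move=> m_gt0 d_gt0 f_cont g_lip /choice [U HU].
have [n gcov] := coverable_graph_columns d_gt0
  (coverable_graph_column m_gt0 d_gt0 f_cont g_lip
    (fun i => (HU i).1) (fun i => (HU i).2)).
apply: coverable_leq gcov; rewrite -big_distrr leq_mul2l /= exchange_big big_distrr.
by apply: leq_sum => i _; exact: sum_card_cells_over_columns (ltW d_gt0) (HU i).1.
Qed.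

End Oscillation.

Section LipschitzWrt.
Variables (R : realType) (m : nat) (f : 'I_m -> R -> R).
Implicit Types (h P Q : R -> R).

Definition lipschitz_wrt h := {within `[0, 1], continuous h} /\
  exists2 L, 0 <= L & forall x y, x \in `[0, 1] -> y \in `[0, 1] ->
    `|h x - h y| <= L * \sum_i `|f i x - f i y|.

Lemma lipschitz_wrt_cst (c : R) : lipschitz_wrt (fun=> c).
Proof.
split; first by move=> x; exact: cst_continuous.
by exists 0 => // x y _ _; rewrite subrr normr0 mul0r.
Qed.

Lemma lipschitz_wrt_proj i : {within `[0, 1], continuous f i} -> lipschitz_wrt (f i).
Proof.
move=> fc; split => //; exists 1 => // x y _ _.
by rewrite mul1r (bigD1 i) //= lerDl sumr_ge0.
Qed.

Lemma lipschitz_wrtD h1 h2 :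
  lipschitz_wrt h1 -> lipschitz_wrt h2 -> lipschitz_wrt (fun x => h1 x + h2 x).
Proof.
move=> [c1 [L1 L10 h1L]] [c2 [L2 L20 h2L]]; split.
  by move=> x; apply: continuousD; [exact: c1|exact: c2].
exists (L1 + L2) => [|x y xI yI]; first by rewrite addr_ge0.
rewrite opprD addrACA mulrDl (le_trans (ler_normD _ _)) //.
by rewrite lerD ?h1L ?h2L.
Qed.

Lemma lipschitz_wrtM h1 h2 :
  lipschitz_wrt h1 -> lipschitz_wrt h2 -> lipschitz_wrt (fun x => h1 x * h2 x).
Proof.
move=> [c1 [L1 L10 h1L]] [c2 [L2 L20 h2L]]; split.
  by move=> x; apply: continuousM; [exact: c1|exact: c2].
have [B1 B10 h1B] := continuous_bounded c1; have [B2 B20 h2B] := continuous_bounded c2.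
exists (B1 * L2 + L1 * B2) => [|x y xI yI]; first by rewrite addr_ge0 // mulr_ge0.
have -> : h1 x * h2 x - h1 y * h2 y = h1 x * (h2 x - h2 y) + (h1 x - h1 y) * h2 y.
  by ring.
apply: le_trans (ler_normD _ _) _; rewrite !normrM mulrDl -mulrA mulrAC.
by rewrite lerD // ler_pM ?h1B ?h2B ?h1L ?h2L // mulr_ge0 // sumr_ge0.
Qed.

Lemma lipschitz_wrtX h k : lipschitz_wrt h -> lipschitz_wrt (fun x => h x ^+ k).
Proof.
move=> hL; elim: k => [|k IH].
  by under eq_fun do rewrite expr0; exact: lipschitz_wrt_cst.
by under eq_fun do rewrite exprS; exact: lipschitz_wrtM.
Qed.

Lemma lipschitz_wrt_sum (T : Type) (r : seq T) (F : T -> R -> R) :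
  (forall t, lipschitz_wrt (F t)) -> lipschitz_wrt (fun x => \sum_(t <- r) F t x).
Proof.
move=> FL; elim: r => [|a r IH].
  by under eq_fun do rewrite big_nil; exact: lipschitz_wrt_cst.
by under eq_fun do rewrite big_cons; exact: lipschitz_wrtD.
Qed.

Lemma lipschitz_wrt_prod (T : Type) (r : seq T) (F : T -> R -> R) :
  (forall t, lipschitz_wrt (F t)) -> lipschitz_wrt (fun x => \prod_(t <- r) F t x).
Proof.
move=> FL; elim: r => [|a r IH].
  by under eq_fun do rewrite big_nil; exact: lipschitz_wrt_cst.
by under eq_fun do rewrite big_cons; exact: lipschitz_wrtM.
Qed.

Lemma lipschitz_wrt_meval (p : mpoly.mpoly m R) :
  (forall i, {within `[0, 1], continuous f i}) ->
  lipschitz_wrt (fun x => mpoly.meval (fun i => f i x) p).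
Proof.
move=> fc; under eq_fun do rewrite mpoly.mevalE.
apply: lipschitz_wrt_sum => mo; apply: lipschitz_wrtM; first exact: lipschitz_wrt_cst.
by apply: lipschitz_wrt_prod => i; apply: lipschitz_wrtX; exact: lipschitz_wrt_proj.
Qed.

Lemma lipschitz_wrt_div_bound P Q :
  lipschitz_wrt P -> lipschitz_wrt Q -> (forall x, x \in `[0, 1] -> Q x != 0) ->
  exists L : nat, forall x y, x \in `[0, 1] -> y \in `[0, 1] ->
    `|P x / Q x - P y / Q y| <= L%:R * \sum_i `|f i x - f i y|.
Proof.
move=> [cP [LP LP0 PL]] [cQ [LQ LQ0 QL]] Q0.
have cQn : {within `[0, 1], continuous (fun x => `|Q x|)}.
  by move=> x; apply: (continuous_comp (cQ x)); exact: norm_continuous.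
have [xm xmI Qxm] := EVT_min ler01 cQn; set c := `|Q xm| in Qxm.
have c0 : 0 < c by rewrite normr_gt0 Q0.
have invQ x : x \in `[0, 1] -> `|(Q x)^-1| <= c^-1.
  by move=> xI; rewrite normfV lef_pV2 ?posrE ?normr_gt0 ?Q0 ?Qxm.
have [BP BP0 PB] := continuous_bounded cP.
pose K := LP * c^-1 + BP * LQ * (c^-1 * c^-1).
have K0 : 0 <= K by rewrite addr_ge0 // !mulr_ge0 // invr_ge0 ltW.
exists (Num.Def.archi_bound K) => x y xI yI.
set S := \sum_i _; have S0 : 0 <= S by rewrite sumr_ge0.
apply: le_trans (_ : K * S <= _); last by rewrite ler_wpM2r // ltW // archi_boundP.
have -> : P x / Q x - P y / Q y =
    (P x - P y) * (Q x)^-1 + P y * (Q y - Q x) * ((Q x)^-1 * (Q y)^-1).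
  by field; rewrite !Q0.
have -> : K * S = LP * S * c^-1 + BP * (LQ * S) * (c^-1 * c^-1) by rewrite /K; ring.
apply: le_trans (ler_normD _ _) _.
rewrite !normrM lerD ?ler_pM ?mulr_ge0 ?invQ ?PL ?PB //.
by rewrite distrC QL.
Qed.

End LipschitzWrt.

Section BoxDimension.
Variable R : realType.
Implicit Types (F : set (R * R)) (s : R).

Lemma near_right0_half (P : R -> Prop) :
  (\forall d \near 0^'+, P d) -> \forall d \near 0^'+, P (d / 2).
Proof.
move=> [e /= e0 Pe]; exists (2 * e) => /= [|d]; first by rewrite mulr_gt0.
rewrite /ball_ /= !sub0r !normrN => de d0; apply: Pe; last by rewrite divr_gt0.
by move: de; rewrite /ball_ /= sub0r normrN !gtr0_norm ?divr_gt0 //; lra.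
Qed.

Lemma upper_box_dim_le F s :
  (\forall d \near 0^'+, (box_ratio F d <= s%:E)%E) -> (upper_box_dim F <= s%:E)%E.
Proof.
move=> [e /= e0 Fe]; pose e' := Num.min e (1 / 2).
have e'0 : 0 < e' by rewrite lt_min e0 divr_gt0.
apply: (@le_trans _ _ (ereal_sup [set box_ratio F d | d in `]0, e'[])).
  apply: ereal_inf_lbound; exists e' => //=; rewrite in_itv /= e'0.
  by apply: (@le_lt_trans _ _ (1 / 2)); [rewrite ge_min lexx orbT|lra].
apply: ge_ereal_sup => _ [d + <-]; rewrite /= in_itv /= => /andP [d0 de'].
apply: Fe => //; rewrite /ball_ /= sub0r normrN gtr0_norm //.
by apply: lt_le_trans de' _; rewrite ge_min lexx.
Qed.

Lemma upper_box_dim_ge0 F : F !=set0 -> finitely_coverable F ->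
  (0 <= upper_box_dim F)%E.
Proof.
move=> F0 Fc; apply: le_ereal_inf_tmp => _ [e + <-].
rewrite /= in_itv /= => /andP [e0 e1].
apply: le_ereal_sup_tmp; exists (box_ratio F (e / 2)).
  by exists (e / 2) => //=; rewrite in_itv /=; apply/andP; split; lra.
have [n0 /covering_number_attained [n [Fn Fdn _]]] := Fc _ (divr_gt0 e0 (ltr0n R 2)).
rewrite /box_ratio Fdn /= lee_fin divr_ge0 ?ln_ge0 ?ler1n ?(coverable_gt0 F0 Fn) //.
by rewrite oppr_ge0 ltW // ln_lt0 //; apply/andP; split; lra.
Qed.

Lemma covering_number_le_expR F s : (upper_box_dim F < s%:E)%E ->
  \forall d \near 0^'+, forall n : nat,
    covering_number F d = n%:R%:E -> n%:R <= expR (s * - ln d).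
Proof.
move=> /ereal_inf_lt [_ [e + <-] Fs]; rewrite /= in_itv /= => /andP [e0 e1].
exists e => //= d; rewrite /ball_ /= sub0r normrN => de d0 n Fn.
have /ltW : (box_ratio F d < s%:E)%E.
  apply: le_lt_trans Fs; apply: ereal_sup_ubound; exists d => //=.
  by rewrite in_itv /= d0 -(gtr0_norm d0) de.
have ld : 0 < - ln d.
  by rewrite oppr_gt0 ln_lt0 // d0 (lt_trans _ e1) // -(gtr0_norm d0).
rewrite /box_ratio Fn /= lee_fin ler_pdivrMr //.
case: n {Fn} => [_|n]; first exact/ltW/expR_gt0.
by rewrite -ler_expR lnK // posrE ltr0n.
Qed.

Lemma upper_box_dim_le_covering F s K : 0 <= s ->
  (\forall d \near 0^'+, exists n : nat,
     covering_number F d = n%:R%:E /\ n%:R <= K * expR (s * - ln d)) ->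
  (upper_box_dim F <= s%:E)%E.
Proof.
move=> s0 FK; apply/lee_addgt0Pr => eps eps0; rewrite -EFinD.
apply: upper_box_dim_le; near=> d.
have d0 : 0 < d by near: d; exact: nbhs_right_gt.
have ld : 0 < - ln d.
  by rewrite oppr_gt0 ln_lt0 // d0; near: d; exact: nbhs_right_lt.
have lK : ln K <= eps * - ln d.
  have : d < expR (- (ln K / eps)) by near: d; apply: nbhs_right_lt; exact: expR_gt0.
  rewrite -ltr_ln ?posrE ?expR_gt0 // expRK ltrNr => /ltW.
  by rewrite ler_pdivrMr // mulrC.
have [n [Fn nK]] : exists n : nat,
    covering_number F d = n%:R%:E /\ n%:R <= K * expR (s * - ln d) by near: d.
rewrite /box_ratio Fn /= lee_fin ler_pdivrMr //.
case: n {Fn} nK => [_|n nK].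
  by rewrite ln0 // mulr_ge0 ?addr_ge0 ?(ltW eps0) ?(ltW ld).
have K0 : 0 < K.
  by rewrite -(pmulr_lgt0 _ (expR_gt0 (s * - ln d))) (lt_le_trans _ nK).
apply: (@le_trans _ _ (ln K + s * - ln d)); last by rewrite mulrDl addrC lerD2l.
rewrite -[s * - ln d]expRK -lnM ?posrE ?expR_gt0 //.
by rewrite ler_ln ?posrE ?ltr0n ?mulr_gt0 ?expR_gt0.
Unshelve. all: by end_near.
Qed.

Lemma upper_box_dim_le_bigmax m (F : set (R * R)) (G : 'I_m -> set (R * R))
    (C : nat) :
  (0 < m)%N -> (forall i, G i !=set0) -> (forall i, finitely_coverable (G i)) ->
  (forall d (n : 'I_m -> nat), 0 < d -> (forall i, coverable (G i) d (n i)) ->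
     coverable F (2 * d) (C * \sum_i n i)) ->
  (upper_box_dim F <= \big[Order.max/-oo]_(i < m) upper_box_dim (G i))%E.
Proof.
move=> m_gt0 G0 Gc GF.
have DG i :
    (upper_box_dim (G i) <= \big[Order.max/-oo]_(i < m) upper_box_dim (G i))%E.
  exact: (le_bigmax _ (fun i => upper_box_dim (G i))).
have := le_trans (upper_box_dim_ge0 (G0 (Ordinal m_gt0)) (Gc _)) (DG (Ordinal m_gt0)).
case: (\big[_/_]_(i < m) _) DG => [r DG r0| _ _|//]; last by rewrite leey.
apply/lee_addgt0Pr => eps eps0; rewrite -EFinD; set s := r + eps.
have s0 : 0 <= s by rewrite addr_ge0 // ?ltW // -lee_fin.
have Gs : \forall d \near 0^'+, forall i n,
    covering_number (G i) d = n%:R%:E -> n%:R <= expR (s * - ln d).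
  apply: filter_forall => i; apply: covering_number_le_expR.
  by rewrite (le_lt_trans (DG i)) // lte_fin ltrDl.
apply: (upper_box_dim_le_covering (K := (C * m)%:R * expR (s * ln 2)) s0).
near=> d.
have Gd : forall i k, covering_number (G i) (d / 2) = k%:R%:E ->
    k%:R <= expR (s * - ln (d / 2)) by near: d; exact: near_right0_half Gs.
have d0 : 0 < d by near: d; exact: nbhs_right_gt.
have d2 : 0 < d / 2 by rewrite divr_gt0.
have /choice [n Gn] i : exists n,
    coverable (G i) (d / 2) n /\ covering_number (G i) (d / 2) = n%:R%:E.
  by have [n0 /covering_number_attained [n [? ? _]]] := Gc i _ d2; exists n.
have : coverable F d (C * \sum_i n i).
  by move: (GF _ n d2 (fun i => (Gn i).1)); rewrite mulrC divfK ?pnatr_eq0.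
move=> /[dup] Fd /covering_number_attained [ng [_ -> ngmin]].
exists ng; split => //.
apply: le_trans (_ : (C * \sum_i n i)%:R <= _); first by rewrite ler_nat ngmin.
have ln_half : - ln (d / 2) = ln 2 + - ln d.
  by rewrite lnM ?posrE ?invr_gt0 // lnV ?posrE //; ring.
rewrite !natrM natr_sum -!mulrA ler_wpM2l // -expRD -mulrDr -ln_half.
apply: le_trans (ler_sum _ (fun i _ => Gd i _ (Gn i).2)) _.
by rewrite sumr_const card_ord mulr_natl.
Unshelve. all: by end_near.
Qed.

End BoxDimension.

Theorem mainTheorem10 (R : realType) (m : nat) (hm : (0 < m)%N)
  (f : 'I_m -> R -> R) (p q : mpoly.mpoly m R) :
  (forall i, {within `[0%R, 1%R], continuous (f i)}) ->
  (forall x, x \in `[0, 1] -> mpoly.meval (fun i => f i x) q != 0) ->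
  (upper_box_dim
     (graph (fun x => mpoly.meval (fun i => f i x) p
                      / mpoly.meval (fun i => f i x) q)%R)
   <= \big[Order.max/-oo]_(i < m) upper_box_dim (graph (f i)))%E.
Proof.
move=> f_cont q_neq0.
have [L gL] := lipschitz_wrt_div_bound (lipschitz_wrt_meval p f_cont)
  (lipschitz_wrt_meval q f_cont) q_neq0.
apply: (upper_box_dim_le_bigmax (C := ((2 * L).+1 * 2)%N) hm) => [i|i|d N d0 fN].
- exact: graph_neq0.
- exact: finitely_coverable_graph.
- by rewrite -mulnA; exact: coverable_graph_lipschitz hm d0 f_cont gL fN.
Qed.
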